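(* Let $m\ge n\ge1$, let $B=\{\cos(\theta)|0\rangle+\sin(\theta)|1\rangle\mid0\le\theta<2\pi\}$ and $B^{\otimes n}=\{|b_1\rangle\otimes\cdots\otimes|b_n\rangle\mid|b_j\rangle\in B\}$. Let $\mathcal E=\{\sqrt{p_i}U_i\mid1\le i\le N\}$ with each $U_i$ unitary on $\mathcal H_{2^m}$ and $\sum_ip_i=1$, let $\rho_a$ be an $(m-n)$-qubit density matrix and $\rho_0$ an $m$-qubit density matrix. If $[B^{\otimes n},\mathcal E,\rho_a,\rho_0]$ is a private quantum channel, then $H(p_1,\dots,p_N)\ge n$, and in particular $N\ge2^n$.
   Context: $\mathcal{H}_{2^k}$ denotes the Hilbert space of $k$ qubits. $H(p_1,\dots,p_N)=-\sum_ip_i\log_2p_i$. Definition (private quantum channel, PQC): for a set $\mathcal S\subseteq\mathcal H_{2^n}$ of pure $n$-qubit states, $\mathcal E=\{\sqrt{p_i}U_i\}$ with $U_i$ unitary on $\mathcal H_{2^m}$, $p_i\ge0$, $\sum_ip_i=1$, $\rho_a$ an $(m-n)$-qubit density matrix and $\rho_0$ an $m$-qubit density matrix, $[\mathcal S,\mathcal E,\rho_a,\rho_0]$ is a PQC iff for all $|\phi\rangle\in\mathcal S$, $\sum_ip_iU_i(|\phi\rangle\langle\phi|\otimes\rho_a)U_i^\dagger=\rho_0$. *)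

From mathcomp Require Import all_boot all_algebra.
From mathcomp Require Import complex mxtens sesquilinear spectral.
From mathcomp Require Import reals exp trigo.
Set Implicit Arguments.
Unset Strict Implicit.
Unset Printing Implicit Defensive.
Import GRing.Theory Num.Theory.
Local Open Scope ring_scope.

Section QDefs.
Variable R : realType.
Local Notation C := R[i].

Definition rC (x : R) : C := (x%:C)%C.

Definition adj {p q : nat} (A : 'M[C]_(p, q)) : 'M[C]_(q, p) :=
  \matrix_(i, j) (A j i)^*.

Definition psd {d : nat} (A : 'M[C]_d) : Prop :=
  adj A = A /\ forall v : 'cV[C]_d, 0 <= (adj v *m A *m v) 0 0.

Definition density (k : nat) (rho : 'M[C]_(2 ^ k)) : Prop :=
  psd rho /\ \tr rho = 1.

Definition qubitB (t : R) : 'cV[C]_2 :=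
  \col_(i < 2) (if i == ord0 then rC (cos t) else rC (sin t)).

Fixpoint prodB (k : nat) (t : nat -> R) : 'cV[C]_(2 ^ k) :=
  match k with
  | 0 => const_mx 1
  | k'.+1 => castmx (esym (expnS 2 k'), muln1 1)
               (qubitB (t 0) *t prodB k' (fun j => t j.+1))
  end.

Definition Btens (n : nat) (phi : 'cV[C]_(2 ^ n)) : Prop :=
  exists t : nat -> R, (forall j, (j < n)%N -> 0 <= t j < 2 * pi) /\ phi = prodB n t.

Lemma qubit_dim (n m : nat) : (n <= m)%N -> (2 ^ n * 2 ^ (m - n) = 2 ^ m)%N.
Proof. by move=> h; rewrite -expnD subnKC. Qed.

Definition join_state (n m : nat) (hnm : (n <= m)%N)
  (phi : 'cV[C]_(2 ^ n)) (rho_a : 'M[C]_(2 ^ (m - n))) : 'M[C]_(2 ^ m) :=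
  castmx (qubit_dim hnm, qubit_dim hnm) ((phi *m adj phi) *t rho_a).

(* [S, E = {sqrt(p_i) U_i}, rho_a, rho_0] is a private quantum channel *)
Definition PQC (n m : nat) (hnm : (n <= m)%N) (S : 'cV[C]_(2 ^ n) -> Prop)
  (N : nat) (p : 'I_N -> R) (U : 'I_N -> 'M[C]_(2 ^ m))
  (rho_a : 'M[C]_(2 ^ (m - n))) (rho0 : 'M[C]_(2 ^ m)) : Prop :=
  forall phi, S phi ->
    \sum_(i < N) rC (p i) *: (U i *m join_state hnm phi rho_a *m adj (U i)) = rho0.

Definition log2 (x : R) : R := ln x / ln 2.

Definition entropy (N : nat) (p : 'I_N -> R) : R :=
  - \sum_(i < N) (if p i == 0 then 0 else p i * log2 (p i)).

End QDefs.

From mathcomp Require Import all_boot all_algebra.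
From mathcomp Require Import complex mxtens sesquilinear spectral.
From mathcomp Require Import reals exp trigo.
From mathcomp Require Import order lra.
Set Implicit Arguments.
Unset Strict Implicit.
Unset Printing Implicit Defensive.
Import Order.TTheory GRing.Theory Num.Theory.
Local Open Scope ring_scope.

(* Fix a weight p_i.  For every product state phi of the axis basis (the 2^n
   states of B^{(x)n} with all angles in {0, pi/2}), expanding rho0 by the channel
   equation and keeping only the i-th term gives
     p_i <= tr (rho0 U_i (|phi><phi| (x) 1) adj U_i),
   because the remaining terms are traces of products of positive operators.
   The projections |phi><phi| (x) 1 sum to the identity, so summing over the basis
   gives 2^n p_i <= tr rho0 = 1.  Hence -log2 p_i >= n for every i, which bounds
   the Shannon entropy, and 1 = sum_i p_i <= N / 2^n. *)

Section MatrixCast.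
Variable K : pzRingType.

Lemma castmx_mulmx a a' b b' c c' (ea : a = a') (eb : b = b') (ec : c = c')
    (A : 'M[K]_(a, b)) (B : 'M[K]_(b, c)) :
  castmx (ea, eb) A *m castmx (eb, ec) B = castmx (ea, ec) (A *m B).
Proof. by case: a' / ea; case: b' / eb; case: c' / ec; rewrite !castmx_id. Qed.

Lemma castmx1 a a' (ea : a = a') : castmx (ea, ea) (1%:M : 'M[K]_a) = 1%:M.
Proof. by case: a' / ea; rewrite castmx_id. Qed.

Lemma castmxD a a' b b' (ea : a = a') (eb : b = b') (A B : 'M[K]_(a, b)) :
  castmx (ea, eb) (A + B) = castmx (ea, eb) A + castmx (ea, eb) B.
Proof. by case: a' / ea; case: b' / eb; rewrite !castmx_id. Qed.

Lemma castmx_sum I a a' b b' (ea : a = a') (eb : b = b') (r : seq I)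
    (F : I -> 'M[K]_(a, b)) :
  castmx (ea, eb) (\sum_(x <- r) F x) = \sum_(x <- r) castmx (ea, eb) (F x).
Proof.
case: a' / ea; case: b' / eb; rewrite castmx_id.
by apply: eq_bigr => x _; rewrite castmx_id.
Qed.

End MatrixCast.

Section Tensor.
Variable K : pzRingType.

Lemma tensmxDr m n p q (A : 'M[K]_(m, n)) (B B' : 'M[K]_(p, q)) :
  A *t (B + B') = A *t B + A *t B'.
Proof. by apply/matrixP => i j; rewrite !mxE mulrDr. Qed.

Lemma tensmxDl m n p q (A A' : 'M[K]_(m, n)) (B : 'M[K]_(p, q)) :
  (A + A') *t B = A *t B + A' *t B.
Proof. by apply/matrixP => i j; rewrite !mxE mulrDl. Qed.

Lemma tensmx_sumr I m n p q (A : 'M[K]_(m, n)) (r : seq I) (F : I -> 'M[K]_(p, q)) :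
  A *t (\sum_(x <- r) F x) = \sum_(x <- r) A *t F x.
Proof. by apply: (big_morph (tensmx A)); [exact: tensmxDr | exact: tensmx0]. Qed.

Lemma tensmx_suml I m n p q (B : 'M[K]_(p, q)) (r : seq I) (F : I -> 'M[K]_(m, n)) :
  (\sum_(x <- r) F x) *t B = \sum_(x <- r) F x *t B.
Proof. by apply: (big_morph (fun A => A *t B)) => [A A'|]; rewrite ?tensmxDl ?tens0mx. Qed.

Lemma tensmx11 m n : (1%:M : 'M[K]_m) *t (1%:M : 'M[K]_n) = 1%:M.
Proof.
apply/matrixP => i j.
case: (mxtens_indexP i) => i1 i2; case: (mxtens_indexP j) => j1 j2.
rewrite tensmxE !mxE (inj_eq (can_inj (@mxtens_indexK m n))) xpair_eqE.
by case: eqP => _; case: eqP => _; rewrite ?mulr0 ?mul0r ?mulr1.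
Qed.

Lemma mxtrace_tens m n (A : 'M[K]_m) (B : 'M[K]_n) : \tr (A *t B) = \tr A * \tr B.
Proof. by rewrite /mxtrace mulr_sum; apply: eq_bigr => k _; rewrite mxE. Qed.

End Tensor.

Section Adjoint.
Variable R : realType.
Local Notation C := R[i].

Lemma conj_rC (x : R) : (rC x)^* = rC x.
Proof. exact: conjc_real. Qed.

Lemma adjE m n (A : 'M[C]_(m, n)) : adj A = (A ^t* )%sesqui.
Proof. by apply/matrixP => i j; rewrite !mxE. Qed.

Lemma adjK m n (A : 'M[C]_(m, n)) : adj (adj A) = A.
Proof. by rewrite !adjE trmxCK. Qed.

Lemma adjM m n p (A : 'M[C]_(m, n)) (B : 'M[C]_(n, p)) :
  adj (A *m B) = adj B *m adj A.
Proof. by rewrite !adjE trmx_mul map_mxM. Qed.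

Lemma adj_tens m n p q (A : 'M[C]_(m, n)) (B : 'M[C]_(p, q)) :
  adj (A *t B) = adj A *t adj B.
Proof. by rewrite !adjE trmx_tens map_mxT. Qed.

Lemma adj1 n : adj (1%:M : 'M[C]_n) = 1%:M.
Proof. by rewrite adjE trmx1 map_mx1. Qed.

Lemma adj_castmx m m' n n' (em : m = m') (en : n = n') (A : 'M[C]_(m, n)) :
  adj (castmx (em, en) A) = castmx (en, em) (adj A).
Proof. by rewrite !adjE trmx_cast map_castmx. Qed.

Lemma unitarymx_adj n (U : 'M[C]_n) : U \is unitarymx ->
  U *m adj U = 1%:M /\ adj U *m U = 1%:M.
Proof.
rewrite adjE => U_unitary; split; first exact/unitarymxP.
by move: U_unitary; rewrite -trmxC_unitary => /unitarymxP; rewrite trmxCK.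
Qed.

End Adjoint.

Section Positivity.
Variable R : realType.
Local Notation C := R[i].

Lemma psd_castmx n n' (e : n = n') (A : 'M[C]_n) : psd A -> psd (castmx (e, e) A).
Proof. by case: n' / e; rewrite castmx_id. Qed.

Lemma psd_mxtrace_conj_ge0 n k (A : 'M[C]_n) (Y : 'M[C]_(k, n)) :
  psd A -> 0 <= \tr (Y *m A *m adj Y).
Proof.
move=> [_ A_ge0]; rewrite /mxtrace; apply: sumr_ge0 => r _.
have := A_ge0 (adj (row r Y)); rewrite adjK.
suff -> : (row r Y *m A *m adj (row r Y)) 0 0 = (Y *m A *m adj Y) r r by [].
rewrite !mxE; apply: eq_bigr => l _; rewrite !mxE; congr (_ * _).
by apply: eq_bigr => k' _; rewrite !mxE.
Qed.

Lemma mxtrace_conj_mul_gram_ge0 n k l (A : 'M[C]_n) (Y : 'M[C]_(k, n))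
    (Z : 'M[C]_(k, l)) :
  psd A -> 0 <= \tr (Y *m A *m adj Y *m (Z *m adj Z)).
Proof.
move=> A_psd; rewrite mulmxA mxtrace_mulC.
have -> : adj Z *m (Y *m A *m adj Y *m Z) = adj Z *m Y *m A *m adj (adj Z *m Y).
  by rewrite adjM adjK !mulmxA.
exact: psd_mxtrace_conj_ge0.
Qed.

Lemma mxtrace_unitary_conj n (U A : 'M[C]_n) : U \is unitarymx ->
  \tr (U *m A *m adj U) = \tr A.
Proof.
by move=> /unitarymx_adj[_ UhU]; rewrite mxtrace_mulC mulmxA UhU mul1mx.
Qed.

End Positivity.

Section ChannelWeight.
Variables (R : realType) (d e N : nat) (p : 'I_N -> R).
Variables (U : 'I_N -> 'M[R[i]]_(d * e)) (rho_a : 'M[R[i]]_e) (rho0 : 'M[R[i]]_(d * e)).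
Hypotheses (p_ge0 : forall j, 0 <= p j) (U_unitary : forall j, U j \is unitarymx).
Hypotheses (rho_a_psd : psd rho_a) (tr_rho_a : \tr rho_a = 1).

Local Notation proj phi := ((phi *m adj phi) *t (1%:M : 'M[R[i]]_e)).
Local Notation encrypts phi :=
  (\sum_(j < N) rC (p j) *: (U j *m ((phi *m adj phi) *t rho_a) *m adj (U j)) = rho0).

Lemma weight_le_overlap (phi : 'cV[R[i]]_d) i :
  adj phi *m phi = 1%:M -> encrypts phi ->
  rC (p i) <= \tr (rho0 *m (U i *m proj phi *m adj (U i))).
Proof.
move=> phi_unit <-; rewrite mulmx_suml raddf_sum (bigD1 i) //=.
set P := proj phi; set X := (phi *m adj phi) *t rho_a.
have diag : \tr (U i *m X *m adj (U i) *m (U i *m P *m adj (U i))) = 1.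
  have [_ UhU] := unitarymx_adj (U_unitary i).
  rewrite -!mulmxA [adj (U i) *m (U i *m _)]mulmxA UhU mul1mx !mulmxA.
  rewrite -(mulmxA (U i)) mxtrace_unitary_conj // /X /P tensmx_mul mulmx1 mulmxA.
  rewrite -(mulmxA phi) phi_unit mulmx1 mxtrace_tens tr_rho_a mulr1.
  by rewrite mxtrace_mulC phi_unit mxtrace1.
(* With W := phi (x) 1, both X and P have the form W A (adj W) with A positive,
   which makes every cross term tr (U_j X (adj U_j) U_i P (adj U_i)) nonnegative. *)
set W := phi *t (1%:M : 'M[R[i]]_e).
have XE : X = W *m ((1%:M : 'M_1) *t rho_a) *m adj W.
  by rewrite /X /W adj_tens adj1 !tensmx_mul mulmx1 mul1mx mulmx1.
have PE : P = W *m 1%:M *m adj W.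
  by rewrite mulmx1 /P /W adj_tens adj1 tensmx_mul mulmx1.
have offdiag j : 0 <= \tr (U j *m X *m adj (U j) *m (U i *m P *m adj (U i))).
  have conjW (V : 'M_(d * e)) k (A : 'M_(k, k)) (Y : 'M_(d * e, k)) :
      V *m (Y *m A *m adj Y) *m adj V = (V *m Y) *m A *m adj (V *m Y).
    by rewrite adjM !mulmxA.
  rewrite XE PE !conjW [_ *m 1%:M]mulmx1.
  by apply: mxtrace_conj_mul_gram_ge0; rewrite tens_scalar1mx; apply: psd_castmx.
rewrite -scalemxAl mxtraceZ diag mulr1 lerDl; apply: sumr_ge0 => j _.
rewrite -scalemxAl mxtraceZ; apply: mulr_ge0; last exact: offdiag.
by rewrite /rC ler0c.
Qed.

Lemma sum_overlap (L : seq 'cV[R[i]]_d) i :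
  \sum_(phi <- L) phi *m adj phi = 1%:M ->
  \sum_(phi <- L) \tr (rho0 *m (U i *m proj phi *m adj (U i))) = \tr rho0.
Proof.
move=> L_sum; rewrite -raddf_sum /= -mulmx_sumr -mulmx_suml -mulmx_sumr.
by rewrite -tensmx_suml L_sum tensmx11 mulmx1 (unitarymx_adj (U_unitary i)).1 mulmx1.
Qed.

Lemma weight_mul_size_le1 (L : seq 'cV[R[i]]_d) i :
  \sum_(phi <- L) phi *m adj phi = 1%:M ->
  {in L, forall phi, adj phi *m phi = 1%:M} ->
  {in L, forall phi, encrypts phi} ->
  \tr rho0 = 1 ->
  p i * (size L)%:R <= 1.
Proof.
move=> L_sum L_unit L_enc tr_rho0.
rewrite -(@lecR R) rmorphM rmorph_nat rmorph1.
have -> : rC (p i) * (size L)%:R = \sum_(phi <- L) rC (p i).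
  by rewrite big_const_seq count_predT iter_addr_0 mulr_natr.
rewrite -tr_rho0 -(sum_overlap i L_sum).
rewrite !big_seq; apply: ler_sum => phi phi_L.
by apply: weight_le_overlap; [exact: L_unit | exact: L_enc].
Qed.

End ChannelWeight.

Lemma PQC_weight_bound (R : realType) n m (hnm : (n <= m)%N)
    (S : 'cV[R[i]]_(2 ^ n) -> Prop) N (p : 'I_N -> R) (U : 'I_N -> 'M[R[i]]_(2 ^ m))
    rho_a rho0 (L : seq 'cV[R[i]]_(2 ^ n)) :
  (forall j, 0 <= p j) -> (forall j, U j \is unitarymx) ->
  density rho_a -> \tr rho0 = 1 ->
  \sum_(phi <- L) phi *m adj phi = 1%:M ->
  {in L, forall phi, adj phi *m phi = 1%:M} -> {in L, forall phi, S phi} ->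
  PQC hnm S p U rho_a rho0 ->
  forall i, p i * (size L)%:R <= 1.
Proof.
move=> p_ge0 + [rho_a_psd tr_rho_a] + L_sum L_unit L_S; rewrite /PQC /join_state.
move: (2 ^ m)%N (qubit_dim hnm) U rho0 => D deD; case: D / deD => U rho0.
move=> U_unitary tr_rho0 pqc i.
apply: (weight_mul_size_le1 p_ge0 U_unitary rho_a_psd tr_rho_a i L_sum L_unit _ tr_rho0).
move=> phi phi_L.
by rewrite -[RHS](pqc phi (L_S phi phi_L)); apply: eq_bigr => j _; rewrite castmx_id.
Qed.

Section AxisBasis.
Variable R : realType.
Local Notation C := R[i].

Definition axis_angle (b : bool) : R := if b then pi / 2 else 0.

Definition bit_angles (s : bitseq) (j : nat) : R := axis_angle (nth false s j).

Fixpoint bitseqs n : seq bitseq :=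
  if n is n'.+1 then
    [seq false :: s | s <- bitseqs n'] ++ [seq true :: s | s <- bitseqs n']
  else [:: [::]].

Definition axis_basis n : seq 'cV[C]_(2 ^ n) :=
  [seq prodB n (bit_angles s) | s <- bitseqs n].

Lemma size_bitseqs n : size (bitseqs n) = (2 ^ n)%N.
Proof. by elim: n => //= n IHn; rewrite size_cat !size_map IHn expnS mul2n addnn. Qed.

Lemma bit_angles_range s j : 0 <= bit_angles s j < 2 * pi.
Proof.
have pi_gt0 : 0 < pi :> R by exact: pi_gt0.
rewrite /bit_angles /axis_angle; case: nth; last by rewrite lexx mulr_gt0.
by rewrite divr_ge0 ?ltW //= ltr_pdivrMr //; lra.
Qed.

Lemma qubitB_unit t : adj (qubitB t) *m qubitB t = 1%:M :> 'M[C]_1.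
Proof.
apply/matrixP => i j; rewrite !ord1 !mxE !big_ord_recl big_ord0 !mxE /= !conj_rC.
by rewrite addr0 /rC -!rmorphM -rmorphD -!expr2 cos2Dsin2 rmorph1.
Qed.

Lemma qubitB_axis_sum :
  qubitB 0 *m adj (qubitB 0) + qubitB (pi / 2) *m adj (qubitB (pi / 2))
  = 1%:M :> 'M[C]_2.
Proof.
apply/matrixP => i j; rewrite !mxE !big_ord_recl !big_ord0 !mxE /=.
rewrite cos0 sin0 cos_pihalf sin_pihalf /rC !rmorph0 !rmorph1.
case: i => [[|[|//]] ?]; case: j => [[|[|//]] ?] /=;
  by rewrite ?rmorph0 ?rmorph1 ?mulr0 ?mul0r ?mulr1 ?addr0 ?add0r.
Qed.

Lemma prodB_unit n t : adj (prodB n t) *m prodB n t = 1%:M :> 'M[C]_1.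
Proof.
elim: n t => [|n IHn] t.
  by apply/matrixP => i j; rewrite !ord1 !mxE big_ord1 !mxE rmorph1 mulr1.
rewrite /= adj_castmx castmx_mulmx adj_tens tensmx_mul IHn qubitB_unit.
by rewrite tensmx11 castmx1.
Qed.

Lemma sum_axis_basis n : \sum_(phi <- axis_basis n) phi *m adj phi = 1%:M.
Proof.
rewrite big_map; elim: n => [|n IHn].
  rewrite big_seq1; apply/matrixP => i j.
  by rewrite !ord1 !mxE big_ord1 !mxE rmorph1 mulr1.
have sum_cons b :
    \sum_(s <- bitseqs n)
      prodB n.+1 (bit_angles (b :: s)) *m adj (prodB n.+1 (bit_angles (b :: s)))
    = castmx (esym (expnS 2 n), esym (expnS 2 n))
        ((qubitB (axis_angle b) *m adj (qubitB (axis_angle b))) *t 1%:M).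
  rewrite -IHn tensmx_sumr castmx_sum; apply: eq_bigr => s _.
  by rewrite /= adj_castmx castmx_mulmx adj_tens tensmx_mul.
rewrite [bitseqs _]/= big_cat /= !big_map !sum_cons.
by rewrite -castmxD -tensmxDl qubitB_axis_sum tensmx11 castmx1.
Qed.

Lemma axis_basis_unit n : {in axis_basis n, forall phi, adj phi *m phi = 1%:M}.
Proof. by move=> _ /mapP[s _ ->]; exact: prodB_unit. Qed.

Lemma axis_basis_Btens n : {in axis_basis n, forall phi, Btens phi}.
Proof.
move=> _ /mapP[s _ ->]; exists (bit_angles s).
by split => // j _; exact: bit_angles_range.
Qed.

Lemma size_axis_basis n : size (axis_basis n) = (2 ^ n)%N.
Proof. by rewrite size_map size_bitseqs. Qed.

End AxisBasis.

Section Entropy.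
Variables (R : realType) (N : nat) (p : 'I_N -> R) (c : R).
Hypotheses (p_ge0 : forall i, 0 <= p i) (p_sum1 : \sum_i p i = 1).
Hypothesis p_le_invc : forall i, p i * c <= 1.

Lemma log2_le_entropy : 0 < c -> log2 c <= entropy p.
Proof.
move=> c_gt0; rewrite /entropy -sumrN.
have -> : log2 c = \sum_i p i * log2 c by rewrite -mulr_suml p_sum1 mul1r.
apply: ler_sum => i _; case: eqP => [->|/eqP pi_neq0]; first by rewrite mul0r oppr0.
have pi_gt0 : 0 < p i by rewrite lt_def pi_neq0 p_ge0.
have ln2_gt0 : 0 < ln (2 : R) by apply: ln_gt0; lra.
rewrite -mulrN ler_wpM2l // /log2 -mulNr ler_pdivlMr // divfK ?gt_eqF //.
have := ln_le0 (p_le_invc i); rewrite lnM ?posrE //; lra.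
Qed.

Lemma le_card_of_weight_bound : c <= N%:R.
Proof.
rewrite -[c]mul1r -{1}p_sum1 mulr_suml -[N in N%:R]card_ord -sumr_const.
by apply: ler_sum => i _; exact: p_le_invc.
Qed.

End Entropy.

Lemma log2_exp2 (R : realType) n : log2 (2 ^+ n : R) = n%:R.
Proof.
rewrite /log2 lnXn ?ltr0Sn // mulrnAl divff //.
by rewrite gt_eqF // ln_gt0 // ltr1n.
Qed.

Theorem corollary9 (R : realType) (n m : nat) (hn : (1 <= n)%N) (hnm : (n <= m)%N)
  (N : nat) (p : 'I_N -> R) (U : 'I_N -> 'M[R[i]]_(2 ^ m))
  (rho_a : 'M[R[i]]_(2 ^ (m - n))) (rho0 : 'M[R[i]]_(2 ^ m)) :
  (forall i, 0 <= p i) -> \sum_(i < N) p i = 1 ->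
  (forall i, U i \is unitarymx) ->
  density rho_a -> density rho0 ->
  PQC hnm (@Btens R n) p U rho_a rho0 ->
  n%:R <= entropy p /\ (2 ^ n <= N)%N.
Proof.
move=> p_ge0 p_sum1 U_unitary rho_a_density [_ tr_rho0] pqc.
have p_le_inv2n i : p i * (2 ^ n)%:R <= 1.
  rewrite -(size_axis_basis R n).
  apply: (PQC_weight_bound p_ge0 U_unitary rho_a_density tr_rho0 _ _ _ pqc).
  - exact: sum_axis_basis.
  - exact: axis_basis_unit.
  - exact: axis_basis_Btens.
split.
- rewrite -(log2_exp2 R) -natrX.
  by apply: log2_le_entropy => //; rewrite ltr0n expn_gt0.
- by rewrite -(ler_nat R); apply: le_card_of_weight_bound p_le_inv2n.
Qed.
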